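(* Let $O_{(4,1)}(x,y,z,w)=x^4z^2w^2+y^4x^2w^2+z^4x^2y^2+w^4y^2z^2-4x^2y^2z^2w^2$, and let $F$ be a real form of degree $8$ in $x,y,z,w$ with $0\le F\le O_{(4,1)}$ pointwise on $\mathbb R^4$. Let $\gamma_{x,3}(y,z,w)$ be the coefficient of $x^3$ in $F$, viewed as a polynomial in $x$ with coefficients in $\mathbb R[y,z,w]$. Then $\gamma_{x,3}$ contains none of the monomials $y^3w^2,y^3zw,y^3z^2,y^2w^3,y^2z^2w,y^2z^3,yzw^3,z^3w^2,z^2w^3$; in fact there are $q_{11},q_{12},q_{13}\in\mathbb R$ with $$\gamma_{x,3}(y,z,w)=yzw\,(q_{11}z^2+q_{12}zw+q_{13}yw),$$ so that $\gamma_{x,3}$ has only the monomials $y^2zw^2$, $yz^3w$, $yz^2w^2$. *)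

From HB Require Import structures.
From mathcomp Require Import all_boot all_order all_algebra.
From mathcomp Require Import mpoly.
From mathcomp Require Import reals.
Set Implicit Arguments. Unset Strict Implicit. Unset Printing Implicit Defensive.
Import Order.TTheory GRing.Theory Num.Theory.
Local Open Scope ring_scope.

Definition ix : 'I_4 := @Ordinal 4 0 isT.
Definition iy : 'I_4 := @Ordinal 4 1 isT.
Definition iz : 'I_4 := @Ordinal 4 2 isT.
Definition iw : 'I_4 := @Ordinal 4 3 isT.

Definition vx {R : realType} : {mpoly R[4]} := 'X_ix.
Definition vy {R : realType} : {mpoly R[4]} := 'X_iy.
Definition vz {R : realType} : {mpoly R[4]} := 'X_iz.
Definition vw {R : realType} : {mpoly R[4]} := 'X_iw.

Definition O41 (R : realType) : {mpoly R[4]} :=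
  vx ^+ 4 * vz ^+ 2 * vw ^+ 2 + vy ^+ 4 * vx ^+ 2 * vw ^+ 2
  + vz ^+ 4 * vx ^+ 2 * vy ^+ 2 + vw ^+ 4 * vy ^+ 2 * vz ^+ 2
  - 4%:R * vx ^+ 2 * vy ^+ 2 * vz ^+ 2 * vw ^+ 2.

From HB Require Import structures.
From mathcomp Require Import all_boot all_order all_algebra.
From mathcomp Require Import mpoly.
From mathcomp Require Import reals.
From mathcomp Require Import lra zify.
Import Order.TTheory GRing.Theory Num.Theory.
Local Open Scope ring_scope.

(* Substituting (x, y, z, w) = (t^a, t^b, t^c, t^d) into 0 <= F <= O_(4,1) gives
   |F(t^a, t^b, t^c, t^d)| <= 4 t^K on (0, 1], where K is the least t-order of
   the four positive terms of O_(4,1).  The left-hand side is a polynomial in t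
   whose coefficient at t^(ap + bq + cr + ds) is the coefficient of
   x^p y^q z^r w^s in F as soon as no other monomial of degree 8 has the same
   weight; if moreover this weight is below K, the coefficient vanishes.  For
   each monomial x^3 y^b z^c w^d of degree 8 other than x^3 y z^3 w,
   x^3 y z^2 w^2 and x^3 y^2 z w^2, one of eight explicit weights (a, b, c, d)
   has both properties. *)

Lemma eq0_of_norm_le_mul (R : realFieldType) (c M : R) :
  (forall t : R, 0 < t <= 1 -> `|c| <= t * M) -> c = 0.
Proof.
move=> hc; apply/normr0_eq0/eqP; rewrite eq_le normr_ge0 andbT leNgt.
apply/negP => c_gt0.
have hM : `|c| <= M by have := hc 1; rewrite ltr01 lexx mul1r; apply.
have M_gt0 : 0 < M := lt_le_trans c_gt0 hM.
have t_gt0 : 0 < `|c| / (M *+ 2) by rewrite divr_gt0 ?mulrn_wgt0.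
have t_le1 : `|c| / (M *+ 2) <= 1 by rewrite ler_pdivrMr ?mulrn_wgt0 // mul1r; lra.
have := hc (`|c| / (M *+ 2)); rewrite t_gt0 t_le1 => /(_ isT).
rewrite mulrAC -mulr_natr invfM mulrA mulfK ?gt_eqF //; lra.
Qed.

Lemma horner_bounded01 {R : realFieldType} (q : {poly R}) :
  exists B : R, forall t : R, 0 <= t <= 1 -> `|q.[t]| <= B.
Proof.
exists (\sum_(i < size q) `|q`_i|) => t /andP[t_ge0 t_le1].
rewrite horner_coef; apply: le_trans (ler_norm_sum _ _ _) _.
apply: ler_sum => i _; rewrite normrM normrX (ger0_norm t_ge0).
by rewrite ler_piMr ?exprn_ile1.
Qed.

Lemma coef_eq0_of_horner_le (R : realFieldType) (K : nat) (p : {poly R}) (C : R) :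
  (forall t : R, 0 < t <= 1 -> `|p.[t]| <= C * t ^+ K) ->
  forall j, (j < K)%N -> p`_j = 0.
Proof.
elim: K p C => [//|K IH] p C hp j ltjK.
have [q [c def_p]] : exists q c, p = q * 'X + c%:P.
  by elim/poly_ind: p {hp} => [|q c _]; [exists 0, 0; rewrite mul0r add0r | exists q, c].
rewrite {p}def_p in hp *.
have [B hB] := horner_bounded01 q.
have c0 : c = 0.
  apply: (@eq0_of_norm_le_mul _ c (`|C| + B)) => t /[dup] t01 /andP[t_gt0 t_le1].
  have := hp t t01; rewrite hornerMXaddC => hpt.
  have hqt : `|q.[t] * t| <= B * t.
    by rewrite normrM (gtr0_norm t_gt0) ler_pM2r // hB // ltW.
  have htK : C * t ^+ K.+1 <= `|C| * t.
    rewrite exprSr mulrA ler_pM2r // (le_trans (ler_norm _)) // normrM normrX.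
    by rewrite (gtr0_norm t_gt0) ler_piMr // exprn_ile1 // ltW.
  have : `|c| <= `|q.[t] * t + c| + `|q.[t] * t|.
    by rewrite -{1}(addKr (q.[t] * t) c) (le_trans (ler_normD _ _)) // addrC normrN.
  lra.
move: hp; rewrite c0 addr0 coefMX => hp.
case: j ltjK => [//|j] ltjK; apply: (IH q C) => // t t01.
have t_gt0 : 0 < t by case/andP: t01.
by have := hp t t01; rewrite hornerMX normrM (gtr0_norm t_gt0) exprSr mulrA ler_pM2r.
Qed.

Section WeightedSubstitution.

Context {n : nat}.
Implicit Types (e : 'I_n -> nat) (m : 'X_{1..n}).

Definition mweight e m : nat := (\sum_i e i * m i)%N.

Definition weight_poly {R : nzRingType} e (F : {mpoly R[n]}) : {poly R} :=
  \sum_(m <- msupp F) F@_m *: 'X^(mweight e m).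

Lemma meval_pow_weight {R : comNzRingType} e (F : {mpoly R[n]}) (t : R) :
  F.@[fun i => t ^+ e i] = (weight_poly e F).[t].
Proof.
rewrite mevalE /weight_poly horner_sum; apply: eq_bigr => m _.
rewrite hornerZ hornerXn /mweight expr_sum; congr (_ * _).
by apply: eq_bigr => i _; rewrite -exprM.
Qed.

Lemma coef_weight_poly {R : nzRingType} e (F : {mpoly R[n]}) m0 :
  {in msupp F, forall m, mweight e m = mweight e m0 -> m = m0} ->
  (weight_poly e F)`_(mweight e m0) = F@_m0.
Proof.
move=> uniq_m0; rewrite /weight_poly coef_sum.
under eq_bigr do rewrite coefZ coefXn.
have [m0_in|m0_out] := boolP (m0 \in msupp F); last first.
  rewrite (memN_msupp_eq0 m0_out) big1_seq // => m /andP[_ m_in].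
  case: eqP => [w_eq|_]; last by rewrite mulr0.
  by move: (m_in); rewrite (uniq_m0 _ m_in (esym w_eq)) (negbTE m0_out).
rewrite (bigD1_seq m0) ?msupp_uniq //= eqxx mulr1 big1_seq ?addr0 // => m.
case/andP=> m_neq m_in; case: eqP => [w_eq|_]; last by rewrite mulr0.
by rewrite (uniq_m0 _ m_in (esym w_eq)) eqxx in m_neq.
Qed.

Lemma mcoeff_eq0_of_weighted_le {R : realFieldType} e (F : {mpoly R[n]}) (C : R) K m0 :
  (forall t : R, 0 < t <= 1 -> `|F.@[fun i => t ^+ e i]| <= C * t ^+ K) ->
  {in msupp F, forall m, mweight e m = mweight e m0 -> m = m0} ->
  (mweight e m0 < K)%N -> F@_m0 = 0.
Proof.
move=> F_le uniq_m0 lt_m0K; rewrite -(coef_weight_poly e F m0 uniq_m0).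
apply: (@coef_eq0_of_horner_le _ K _ C) => // t t01.
by rewrite -meval_pow_weight F_le.
Qed.

End WeightedSubstitution.

Definition vec4 (a b c d : nat) (i : 'I_4) : nat := nth 0%N [:: a; b; c; d] i.

Definition mon4 (a b c d : nat) : 'X_{1..4} := [multinom vec4 a b c d i | i < 4].

Lemma mon4_eta (m : 'X_{1..4}) : m = mon4 (m ix) (m iy) (m iz) (m iw).
Proof.
apply/mnmP => -[[|[|[|[|k]]]] lt_k4] //; rewrite mnmE /=; congr (m _); exact: val_inj.
Qed.

Lemma mdeg_mon4 (a b c d : nat) : mdeg (mon4 a b c d) = (a + b + c + d)%N.
Proof. by rewrite mdegE !big_ord_recl big_ord0 !mnmE /= addn0 !addnA. Qed.

Lemma mweight_mon4 (a b c d p q r s : nat) :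
  mweight (vec4 a b c d) (mon4 p q r s) = (a * p + b * q + c * r + d * s)%N.
Proof. by rewrite /mweight !big_ord_recl big_ord0 !mnmE /= addn0 !addnA. Qed.

Lemma meval_O41 (R : realType) (v : 'I_4 -> R) : (O41 R).@[v] =
  v ix ^+ 4 * v iz ^+ 2 * v iw ^+ 2 + v iy ^+ 4 * v ix ^+ 2 * v iw ^+ 2
  + v iz ^+ 4 * v ix ^+ 2 * v iy ^+ 2 + v iw ^+ 4 * v iy ^+ 2 * v iz ^+ 2
  - 4%:R * v ix ^+ 2 * v iy ^+ 2 * v iz ^+ 2 * v iw ^+ 2.
Proof. by rewrite /O41 /vx /vy /vz /vw !(mevalB, mevalD, mevalM, mevalXU, meval1). Qed.

Definition O41_order (a b c d : nat) : nat :=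
  minn (minn (4 * a + 2 * c + 2 * d) (2 * a + 4 * b + 2 * d))
       (minn (2 * a + 2 * b + 4 * c) (2 * b + 2 * c + 4 * d)).

Lemma O41_pow_le (R : realType) (a b c d : nat) (t : R) : 0 < t <= 1 ->
  (O41 R).@[fun i => t ^+ vec4 a b c d i] <= 4%:R * t ^+ O41_order a b c d.
Proof.
case/andP=> t_gt0 t_le1; rewrite meval_O41 /= -!exprM -!exprD.
set K := O41_order a b c d.
have le_tK N : (K <= N)%N -> t ^+ N <= t ^+ K.
  by move=> le_KN; apply: (ler_wiXn2l (ltW t_gt0) t_le1 le_KN).
have := le_tK (a * 4 + c * 2 + d * 2)%N ltac:(rewrite /K /O41_order; lia).
have := le_tK (b * 4 + a * 2 + d * 2)%N ltac:(rewrite /K /O41_order; lia).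
have := le_tK (c * 4 + a * 2 + b * 2)%N ltac:(rewrite /K /O41_order; lia).
have := le_tK (d * 4 + b * 2 + c * 2)%N ltac:(rewrite /K /O41_order; lia).
have : 0 <= t ^+ (a * 2) * t ^+ (b * 2) * t ^+ (c * 2) * t ^+ (d * 2).
  by rewrite !mulr_ge0 // exprn_ge0 // ltW.
lra.
Qed.

Lemma mcoeff_eq0_of_le_O41 (R : realType) (F : {mpoly R[4]}) (a b c d p q r s : nat) :
  F \is 8.-homog ->
  (forall v : 'I_4 -> R, 0 <= F.@[v] /\ F.@[v] <= (O41 R).@[v]) ->
  (a * p + b * q + c * r + d * s < O41_order a b c d)%N ->
  (forall p' q' r' s', (p' + q' + r' + s' = 8)%N ->
     (a * p' + b * q' + c * r' + d * s' = a * p + b * q + c * r + d * s)%N ->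
     p' = p /\ q' = q /\ r' = r /\ s' = s) ->
  F@_(mon4 p q r s) = 0.
Proof.
move=> homF F_bnd lt_order uniq_pqrs.
apply: (@mcoeff_eq0_of_weighted_le _ _ (vec4 a b c d) _ 4%:R (O41_order a b c d)).
- move=> t t01; have [F_ge0 F_le] := F_bnd (fun i => t ^+ vec4 a b c d i).
  by rewrite ger0_norm // (le_trans F_le) ?O41_pow_le.
- move=> m m_in; rewrite [m](mon4_eta m) !mweight_mon4 => eq_w.
  have deg8 : (m ix + m iy + m iz + m iw = 8)%N.
    by rewrite -mdeg_mon4 -mon4_eta (dhomog_mf homF m_in).
  by have [-> [-> [-> ->]]] := uniq_pqrs _ _ _ _ deg8 eq_w.
- by rewrite mweight_mon4.
Qed.

Tactic Notation "O41_weight" uconstr(a) uconstr(b) uconstr(c) uconstr(d) :=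
  refine (@mcoeff_eq0_of_le_O41 _ _ a b c d _ _ _ _ _ _ _ _) => //; move=> *; lia.

Theorem lemma1 (R : realType) (F : {mpoly R[4]}) :
  F \is 8.-homog ->
  (forall v : 'I_4 -> R, 0 <= F.@[v] /\ F.@[v] <= (O41 R).@[v]) ->
  exists q11 q12 q13 : R,
    forall m : 'X_{1..4}, m ix = 3%N ->
      F@_m = (if (m iy, m iz, m iw) == (1, 3, 1)%N then q11
              else if (m iy, m iz, m iw) == (1, 2, 2)%N then q12
              else if (m iy, m iz, m iw) == (2, 1, 2)%N then q13
              else 0).
Proof.
move=> homF F_bnd.
exists F@_(mon4 3 1 3 1), F@_(mon4 3 1 2 2), F@_(mon4 3 2 1 2) => m mx3.
rewrite {1}(mon4_eta m) mx3; move: (m iy) (m iz) (m iw) => b c d.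
have [deg8|deg_neq8] := eqVneq (b + c + d)%N 5%N; last first.
  rewrite (dhomog_nemf_coeff homF); last first.
    by change (mdeg (mon4 3 b c d) != 8%N); rewrite mdeg_mon4; apply/eqP; lia.
  do 3 (case: ifP => [/eqP[eb ec ed]|_]; first by move: deg_neq8; rewrite eb ec ed).
  done.
case: b deg8 => [|[|[|[|[|[|b]]]]]]; case: c => [|[|[|[|[|[|c]]]]]];
  case: d => [|[|[|[|[|[|d]]]]]] // _ /=;
  first [ done
  | O41_weight 6 8 11 0 | O41_weight 0 2 11 12 | O41_weight 5 12 0 8 | O41_weight 0 3 8 15
  | O41_weight 0 3 12 4 | O41_weight 0 4 3 12 | O41_weight 0 4 12 3 | O41_weight 3 12 4 0 ].
Qed.
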